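(* Let $G$ be a group with finite generating set $\mathcal G$, and suppose that the Cayley graph of $G$ with respect to $\mathcal G$ has property $L_\delta$ for some $\delta\ge 0$. Then $G$ is almost convex with respect to $\mathcal G$ with constant $3\delta+2$: for every integer $n\ge 0$ and every two vertices $g,g'$ of the Cayley graph with $d(1,g)=d(1,g')=n$ and $d(g,g')\le 2$, there is a path in the Cayley graph from $g$ to $g'$ of length at most $3\delta+2$ that lies entirely in the closed ball of radius $n$ about the identity vertex $1$.
   Context: The Cayley graph of $G$ with respect to $\mathcal G$ is regarded as a geodesic metric space in which each edge is isometric to the unit interval; points of this space may lie in the interiors of edges, and $d$ denotes the resulting path metric (extending the word metric on vertices). The closed ball of radius $n$ is the set of points at distance at most $n$ from the identity vertex. For $\delta\ge 0$, a finite sequence of points $(x_1,\dots,x_n)$ is a $\delta$-path if $d(x_1,x_2)+\dots+d(x_{n-1},x_n)\le d(x_1,x_n)+\delta$. The space has property $L_\delta$ if for every three distinct points $x,y,z$ there exists a point $t$ such that $(x,t,y)$, $(y,t,z)$ and $(z,t,x)$ are all $\delta$-paths. *)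

From Stdlib Require Import Reals List ClassicalEpsilon.
Open Scope R_scope.
Set Implicit Arguments.

Record Group := {
  carrier :> Type;
  gmul : carrier -> carrier -> carrier;
  ginv : carrier -> carrier;
  gone : carrier;
  gmulA : forall x y z, gmul x (gmul y z) = gmul (gmul x y) z;
  gmul1 : forall x, gmul gone x = x;
  gmulV : forall x, gmul (ginv x) x = gone
}.

Section Cayley.
Variables (G : Group) (gens : list G).

(* gens generates G as a group (finite since it is a list). *)
Definition generates : Prop :=
  forall g : G, exists w : list G,
    (forall s, In s w -> In s gens \/ In (ginv G s) gens) /\
    g = fold_right (gmul G) (gone G) w.

Definition adj (a b : G) : Prop :=
  a <> b /\ (In (gmul G (ginv G a) b) gens \/ In (ginv G (gmul G (ginv G a) b)) gens).

Inductive reach : nat -> G -> G -> Prop :=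
| reach0 : forall a, reach 0 a a
| reachS : forall n a b c, adj a b -> reach n b c -> reach (S n) a c.

Definition vdist (a b : G) : nat :=
  epsilon (inhabits 0%nat)
    (fun n => reach n a b /\ forall m, reach m a b -> (n <= m)%nat).

(* Points of the metric Cayley graph: Pt a b t is the point at distance t
   from a on the edge [a,b]; vertices are Pt a a 0. *)
Record point := Pt { pa : G; pb : G; pt : R }.

Definition valid (p : point) : Prop :=
  0 <= pt p <= 1 /\ ((pa p = pb p /\ pt p = 0) \/ adj (pa p) (pb p)).

Definition vertex (g : G) : point := Pt g g 0.

Definition via_ends (p q : point) : R :=
  Rmin (Rmin (pt p + INR (vdist (pa p) (pa q)) + pt q)
             (pt p + INR (vdist (pa p) (pb q)) + (1 - pt q)))
       (Rmin ((1 - pt p) + INR (vdist (pb p) (pa q)) + pt q)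
             ((1 - pt p) + INR (vdist (pb p) (pb q)) + (1 - pt q))).

(* Path metric of the Cayley graph with unit-length edges. *)
Definition pdist (p q : point) : R :=
  if excluded_middle_informative (pa p = pa q /\ pb p = pb q)
  then Rmin (Rabs (pt p - pt q)) (via_ends p q)
  else if excluded_middle_informative (pa p = pb q /\ pb p = pa q)
  then Rmin (Rabs (pt p - (1 - pt q))) (via_ends p q)
  else via_ends p q.

Fixpoint path_len (l : list point) : R :=
  match l with
  | x :: ((y :: _) as t) => pdist x y + path_len t
  | _ => 0
  end.

Definition delta_path (delta : R) (l : list point) : Prop :=
  match l with
  | nil => True
  | x :: _ => path_len l <= pdist x (last l x) + delta
  end.

(* Property L_delta; "distinct points" = points at positive distance. *)
Definition has_L (delta : R) : Prop :=
  forall x y z : point, valid x -> valid y -> valid z ->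
    pdist x y <> 0 -> pdist y z <> 0 -> pdist z x <> 0 ->
    exists t : point, valid t /\
      delta_path delta (x :: t :: y :: nil) /\
      delta_path delta (y :: t :: z :: nil) /\
      delta_path delta (z :: t :: x :: nil).

Definition in_ball (n : nat) (p : point) : Prop :=
  pdist (vertex (gone G)) p <= INR n.

Fixpoint edge_path (l : list G) : Prop :=
  match l with
  | a :: ((b :: _) as t) => adj a b /\ edge_path t
  | _ => True
  end.

Fixpoint edges_in_ball (n : nat) (l : list G) : Prop :=
  match l with
  | a :: ((b :: _) as t) =>
      (forall s, 0 <= s <= 1 -> in_ball n (Pt a b s)) /\ edges_in_ball n t
  | _ => True
  end.

End Cayley.
Arguments generates {G}.
Arguments has_L {G}.
Arguments pdist {G}.
Arguments edge_path {G}.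
Arguments edges_in_ball {G}.

(* Descend from g and g' along geodesics towards 1 for a distance r = floor(delta)/2,
   to points u and u', and let t be the point that L_delta provides for u, u' and 1.
   The path g -> u -> t -> u' -> g' has length at most 2r + d(u,u') + delta
   <= 4r + 2 + delta <= 3 delta + 2.  A point s between u and t satisfies
   d(1,s) <= (d(1,u) + d(1,t) + d(u,t))/2 <= d(1,u) + delta/2 <= n - r + delta/2,
   and the remaining excess of less than 1/2 disappears because vertex levels are
   integers.  In the graph the path has to pass through the ends of the edges carrying
   u and t, so the level bounds are checked edge by edge; when n <= r + 1 one simply
   goes through 1. *)
From Stdlib Require Import Reals List Lra Lia Classical ClassicalEpsilon ZArith Wf_nat.
Open Scope R_scope.

Section GroupFacts.
Variable G : Group.
Notation mul := (gmul G).
Notation inv := (ginv G).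
Notation one := (gone G).

Lemma gmulV_r x : mul x (inv x) = one.
Proof.
  transitivity (mul (mul (inv (inv x)) (inv x)) (mul x (inv x))).
  { rewrite gmulV, gmul1; reflexivity. }
  rewrite <- gmulA, (gmulA G (inv x) x), gmulV, gmul1. apply gmulV.
Qed.

Lemma gmul1_r x : mul x one = x.
Proof. rewrite <- (gmulV G x), gmulA, gmulV_r, gmul1. reflexivity. Qed.

Lemma ginvK x : inv (inv x) = x.
Proof.
  rewrite <- (gmul1_r (inv (inv x))), <- (gmulV G x), gmulA, gmulV, gmul1. reflexivity.
Qed.

Lemma ginv_unique a b : mul a b = one -> a = inv b.
Proof. intro H. rewrite <- (gmul1_r a), <- (gmulV_r b), gmulA, H, gmul1. reflexivity. Qed.

Lemma ginvM x y : inv (mul x y) = mul (inv y) (inv x).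
Proof.
  symmetry. apply ginv_unique.
  rewrite <- gmulA, (gmulA G (inv x) x y), gmulV, gmul1, gmulV. reflexivity.
Qed.
End GroupFacts.

Ltac destruct_em :=
  match goal with |- context [excluded_middle_informative ?P] =>
    destruct (excluded_middle_informative P) end.
Tactic Notation "destruct_em" "as" simple_intropattern(pat) :=
  match goal with |- context [excluded_middle_informative ?P] =>
    destruct (excluded_middle_informative P) as pat end.

Ltac unfold_Rmin := unfold Rmin in *; repeat match goal with
  | |- context [Rle_dec ?a ?b] => destruct (Rle_dec a b)
  | H : context [Rle_dec ?a ?b] |- _ => destruct (Rle_dec a b)
  end.

Lemma last_cons_default (A : Type) (x : A) l a b : last (x :: l) a = last (x :: l) b.
Proof. revert x; induction l as [|y l IH]; intros; simpl; auto. destruct l; auto. apply (IH y). Qed.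

Section Cayley.
Variables (G : Group) (gens : list G).
Hypothesis Hgen : generates gens.

Notation mul := (gmul G).
Notation inv := (ginv G).
Notation one := (gone G).
Notation d := (vdist G gens).
Notation adjg := (adj G gens).
Notation wlen a := (d one a).
Notation reachg := (reach G gens).
Notation dist := (pdist gens).

Lemma adj_sym a b : adjg a b -> adjg b a.
Proof.
  intros [Hne H]. split; [congruence|].
  replace (mul (inv b) a) with (inv (mul (inv a) b)) by (rewrite ginvM, ginvK; reflexivity).
  rewrite ginvK. tauto.
Qed.

Lemma reach_trans n m a b c : reachg n a b -> reachg m b c -> reachg (n + m) a c.
Proof. induction 1; simpl; auto. intros. econstructor; eauto. Qed.

Lemma reach_sym n a b : reachg n a b -> reachg n b a.
Proof.
  induction 1 as [|n a b c Hab _ IH]; [constructor|].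
  replace (S n) with (n + 1)%nat by lia. apply reach_trans with b; auto.
  econstructor; [apply adj_sym; eauto|constructor].
Qed.

Lemma reach_word a (w : list G) :
  (forall s, In s w -> In s gens \/ In (inv s) gens) ->
  exists n, reachg n a (mul a (fold_right mul one w)).
Proof.
  revert a; induction w as [|s w IH]; intros a Hw; simpl.
  - exists 0%nat. rewrite gmul1_r. constructor.
  - destruct (IH (mul a s)) as [n Hn]; [intros; apply Hw; simpl; auto|].
    rewrite gmulA.
    (* A letter with a s = a would be a loop, which the simple Cayley graph omits. *)
    destruct (classic (mul a s = a)) as [E|E].
    + exists n. rewrite E in Hn |- *. exact Hn.
    + exists (S n). econstructor; [|exact Hn]. split; [congruence|].
      rewrite gmulA, gmulV, gmul1. apply Hw; simpl; auto.
Qed.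

Lemma reach_exists a b : exists n, reachg n a b.
Proof.
  destruct (Hgen (mul (inv a) b)) as [w [Hw E]].
  destruct (reach_word a w Hw) as [n Hn]. exists n.
  rewrite <- E, gmulA, gmulV_r, gmul1 in Hn. exact Hn.
Qed.

Lemma vdist_spec a b : reachg (d a b) a b /\ forall m, reachg m a b -> (d a b <= m)%nat.
Proof.
  unfold vdist. apply epsilon_spec.
  destruct (dec_inh_nat_subset_has_unique_least_element (fun n => reachg n a b))
    as [n [Hn _]]; [intro; apply classic|apply reach_exists|eauto].
Qed.

Lemma vdist_reach a b : reachg (d a b) a b.
Proof. apply vdist_spec. Qed.

Lemma vdist_min m a b : reachg m a b -> (d a b <= m)%nat.
Proof. apply vdist_spec. Qed.

Lemma vdist_refl a : d a a = 0%nat.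
Proof. generalize (vdist_min 0 a a (reach0 _ _ a)). lia. Qed.

Lemma vdist_triangle a b c : (d a c <= d a b + d b c)%nat.
Proof. apply vdist_min, reach_trans with b; apply vdist_reach. Qed.

Lemma vdist_sym a b : d a b = d b a.
Proof. apply Nat.le_antisymm; apply vdist_min, reach_sym, vdist_reach. Qed.

Lemma vdist_adj a b : adjg a b -> (d a b <= 1)%nat.
Proof. intro H. apply vdist_min. econstructor; eauto. constructor. Qed.

Lemma vdist_eq0 a b : d a b = 0%nat -> a = b.
Proof. intro H. generalize (vdist_reach a b). rewrite H. inversion 1; auto. Qed.

Lemma vdist_reach_ends_le k k' a a' b b' : reachg k a b -> reachg k' a' b' ->
  (d b b' <= k + d a a' + k')%nat.
Proof.
  intros H H'. generalize (vdist_triangle b a b') (vdist_triangle a a' b')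
    (vdist_min _ _ _ H) (vdist_min _ _ _ H'). rewrite (vdist_sym b a). lia.
Qed.

Lemma vdist_ge1 a b : a <> b -> (1 <= d a b)%nat.
Proof. intro H. destruct (d a b) eqn:E; [apply vdist_eq0 in E; tauto|lia]. Qed.

Lemma exists_parent p : (1 <= wlen p)%nat -> exists q, adjg p q /\ (wlen q + 1 = wlen p)%nat.
Proof.
  intro H. generalize (vdist_reach p one). rewrite vdist_sym in H.
  destruct (d p one) as [|k] eqn:E; [lia|].
  inversion 1 as [|k' a' b c Hab Hbc]; subst. exists b. split; auto.
  generalize (vdist_min _ _ _ Hbc) (vdist_triangle p b one) (vdist_adj _ _ Hab).
  rewrite (vdist_sym one b), (vdist_sym one p), E. lia.
Qed.

Lemma pdist_vertices a b : dist (vertex G a) (vertex G b) = INR (d a b).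
Proof.
  unfold pdist, via_ends, vertex; simpl. generalize (pos_INR (d a b)).
  destruct_em as [[-> _]|_]; [rewrite vdist_refl, Rminus_0_r, Rabs_R0; simpl|]; unfold_Rmin; lra.
Qed.

Lemma pdist_vertex_point w x y t : valid gens (Pt G x y t) ->
  dist (vertex G w) (Pt G x y t) = Rmin (INR (d w x) + t) (INR (d w y) + (1 - t)).
Proof.
  intros [Ht Hxy]. simpl in Ht, Hxy.
  unfold pdist, via_ends, vertex; simpl.
  generalize (pos_INR (d w x)) (pos_INR (d w y)).
  destruct_em as [[-> ->]|N]; [|destruct_em as [[-> ->]|_]].
  - destruct Hxy as [[_ ->]|[? _]]; [|tauto].
    rewrite vdist_refl, Rminus_0_r, Rabs_R0. simpl. unfold_Rmin; lra.
  - destruct Hxy as [[? _]|[? _]]; tauto.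
  - unfold_Rmin; lra.
Qed.

Lemma pdist_le_via_ends p q : dist p q <= via_ends gens p q.
Proof. unfold pdist. repeat destruct_em; try apply Rmin_r; lra. Qed.

Lemma via_ends_sym p q : via_ends gens p q = via_ends gens q p.
Proof.
  unfold via_ends. rewrite (vdist_sym (pa q) (pa p)), (vdist_sym (pa q) (pb p)),
    (vdist_sym (pb q) (pa p)), (vdist_sym (pb q) (pb p)). unfold_Rmin; lra.
Qed.

Lemma pdist_sym p q : dist p q = dist q p.
Proof.
  unfold pdist. rewrite via_ends_sym.
  destruct p as [a b s], q as [a' b' s']; simpl.
  repeat destruct_em;
    try solve [exfalso; repeat match goal with H : _ /\ _ |- _ => destruct H end; subst; tauto].
  - rewrite Rabs_minus_sym. reflexivity.
  - replace (s - (1 - s')) with (s' - (1 - s)) by ring. reflexivity.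
  - reflexivity.
Qed.

Lemma pdist_cases p q : dist p q = via_ends gens p q \/
  (pa p = pa q /\ pb p = pb q /\ dist p q = Rabs (pt p - pt q)) \/
  (pa p = pb q /\ pb p = pa q /\ dist p q = Rabs (pt p - (1 - pt q))).
Proof.
  unfold pdist. repeat destruct_em; unfold Rmin; try destruct (Rle_dec _ _); tauto.
Qed.

Lemma valid_vertex a : valid gens (vertex G a).
Proof. unfold valid, vertex; simpl. split; [lra|]. left; auto. Qed.

Lemma valid_edge_point p q s : adjg p q -> 0 <= s <= 1 -> valid gens (Pt G p q s).
Proof. intros. unfold valid; simpl; tauto. Qed.

Definition edge_end (x y : G) (tau : R) (e : G) (c : R) : Prop :=
  (e = x /\ c = tau) \/ (e = y /\ c = 1 - tau).

Lemma vdist_edge_end_le x y tau e c : valid gens (Pt G x y tau) -> edge_end x y tau e c ->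
  INR (wlen e) <= dist (vertex G one) (Pt G x y tau) + c.
Proof.
  intros V Hec. rewrite pdist_vertex_point by exact V.
  assert (Hxy : (d x y <= 1)%nat).
  { destruct V as [_ [[E _]|A]]; simpl in *;
      [subst; rewrite vdist_refl; lia|apply vdist_adj; exact A]. }
  generalize (vdist_triangle one x y) (vdist_triangle one y x).
  rewrite (vdist_sym y x). intros L1 L2.
  apply le_INR in L1, L2. apply le_INR in Hxy. simpl in Hxy. rewrite plus_INR in L1, L2.
  destruct V as [Ht _]. simpl in Ht.
  destruct Hec as [[-> ->]|[-> ->]]; unfold_Rmin; lra.
Qed.

Lemma pdist_one_edge_point_le p q k n s : (wlen q + k + 1 = n)%nat -> 0 <= s <= 1 ->
  dist (vertex G one) (Pt G p q s) <= INR n - (INR k + s).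
Proof.
  intros Hq Hs. apply (f_equal INR) in Hq. rewrite !plus_INR in Hq. simpl in Hq.
  eapply Rle_trans; [apply pdist_le_via_ends|].
  unfold via_ends, vertex; simpl. generalize (pos_INR (wlen p)). unfold_Rmin; lra.
Qed.

Lemma pdist_one_edge_point_neq0 p q s : adjg p q -> (1 <= wlen p)%nat -> (1 <= wlen q)%nat ->
  0 <= s <= 1 -> dist (vertex G one) (Pt G p q s) <> 0.
Proof.
  intros A Hp Hq Hs. rewrite pdist_vertex_point by (apply valid_edge_point; auto).
  apply (le_INR 1) in Hp, Hq. simpl in Hp, Hq. unfold_Rmin; lra.
Qed.

Lemma pdist_edge_points_le p q p' q' s : 0 <= s <= 1 ->
  dist (Pt G p q s) (Pt G p' q' s) <= 2 * s + INR (d p p').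
Proof.
  intro Hs. eapply Rle_trans; [apply pdist_le_via_ends|].
  unfold via_ends; simpl. unfold_Rmin; lra.
Qed.

Lemma pdist_edge_points_neq0 p q p' q' s : p <> p' -> wlen p = wlen p' ->
  (wlen q + 1 = wlen p)%nat -> (wlen q' + 1 = wlen p')%nat -> 0 <= s <= 1/2 ->
  dist (Pt G p q s) (Pt G p' q' s) <> 0.
Proof.
  intros N L L1 L2 Hs.
  destruct (pdist_cases (Pt G p q s) (Pt G p' q' s)) as [E|[[E1 [_ _]]|[E1 [E2 _]]]];
    simpl in *; [|tauto|subst; lia].
  rewrite E. unfold via_ends; simpl.
  assert (H1 : 1 <= INR (d p p')) by (apply (le_INR 1), vdist_ge1; auto).
  generalize (pos_INR (d p q')) (pos_INR (d q p')) (pos_INR (d q q')). unfold_Rmin; lra.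
Qed.

Lemma has_L_center delta a b c : has_L gens delta ->
  valid gens a -> valid gens b -> valid gens c ->
  dist a b <> 0 -> dist b c <> 0 -> dist c a <> 0 ->
  exists t, valid gens t /\ dist a t + dist b t <= dist a b + delta /\
    dist b t + dist c t <= dist b c + delta /\ dist c t + dist a t <= dist c a + delta.
Proof.
  intros HL Va Vb Vc Nab Nbc Nca.
  destruct (HL a b c Va Vb Vc Nab Nbc Nca) as [t [Vt [P1 [P2 P3]]]].
  unfold delta_path in P1, P2, P3; simpl in P1, P2, P3.
  rewrite (pdist_sym t b) in P1. rewrite (pdist_sym t c) in P2. rewrite (pdist_sym t a) in P3.
  exists t. split; [exact Vt|split; [lra|split; lra]].
Qed.

(* A walk whose edges satisfy |a| + |b| + 1 <= 2n: such an edge lies in the closed ball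
   B(n), its points being at distance min(|a| + s, |b| + 1 - s) from 1. *)
Inductive ball_walk (n : nat) : G -> G -> nat -> Prop :=
| ball_walk0 a : ball_walk n a a 0
| ball_walkS a b c k : adjg a b -> (wlen a + wlen b + 1 <= 2 * n)%nat ->
    ball_walk n b c k -> ball_walk n a c (S k).

Lemma ball_walk_trans n a b c k l :
  ball_walk n a b k -> ball_walk n b c l -> ball_walk n a c (k + l).
Proof. induction 1; simpl; auto. intros; econstructor; eauto. Qed.

Lemma ball_walk_snoc n a b c k : ball_walk n a b k -> adjg b c ->
  (wlen b + wlen c + 1 <= 2 * n)%nat -> ball_walk n a c (S k).
Proof.
  intros. replace (S k) with (k + 1)%nat by lia. eapply ball_walk_trans; eauto.
  econstructor; eauto. constructor.
Qed.

Lemma ball_walk_sym n a b k : ball_walk n a b k -> ball_walk n b a k.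
Proof. induction 1. constructor. eapply ball_walk_snoc; eauto. apply adj_sym; auto. lia. Qed.

Lemma ball_walk_reach n a b k : ball_walk n a b k -> reachg k a b.
Proof. induction 1; econstructor; eauto. Qed.

Lemma reach_ball_walk n j r f e : reachg r f e ->
  (wlen f + j <= n)%nat -> (wlen e + r <= n + j)%nat -> ball_walk n f e r.
Proof.
  (* The vertex i steps along the walk has level at most |f| + i and at most |e| + r - i. *)
  intro H. enough (K : forall i, (wlen f + j <= n + i)%nat -> (wlen e + r + i <= n + j)%nat ->
    ball_walk n f e r) by (intros; apply (K 0%nat); lia).
  induction H as [a|r a b c Hab Hbc IH]; intros i Ha Hc; [constructor|].
  assert (Hb1 : (wlen b <= wlen a + 1)%nat)
    by (generalize (vdist_triangle one a b) (vdist_adj _ _ Hab); lia).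
  assert (Hb2 : (wlen b <= wlen c + r)%nat).
  { generalize (vdist_triangle one c b) (vdist_min _ _ _ Hbc).
    rewrite (vdist_sym c b). lia. }
  econstructor; [exact Hab|lia|]. apply (IH (S i)); lia.
Qed.

Lemma geodesic_descent g n j : wlen g = n -> (j <= n)%nat ->
  exists p, (wlen p + j = n)%nat /\ ball_walk n g p j.
Proof.
  intros Hg. induction j as [|j IH]; intro Hj.
  - exists g. split; [lia|constructor].
  - destruct IH as [p [Hp Wp]]; [lia|].
    destruct (exists_parent p) as [q [Hpq Hq]]; [lia|].
    exists q. split; [lia|]. eapply ball_walk_snoc; eauto. lia.
Qed.

Lemma in_ball_edge n a b s : adjg a b -> (wlen a + wlen b + 1 <= 2 * n)%nat -> 0 <= s <= 1 ->
  in_ball gens n (Pt G a b s).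
Proof.
  intros A H Hs. unfold in_ball. rewrite pdist_vertex_point by (apply valid_edge_point; auto).
  apply le_INR in H. rewrite !plus_INR, mult_INR in H. simpl in H.
  unfold_Rmin; lra.
Qed.

Lemma ball_walk_edge_path n a b k : ball_walk n a b k ->
  exists l, edge_path gens (a :: l) /\ last (a :: l) a = b /\
    length l = k /\ edges_in_ball gens n (a :: l).
Proof.
  induction 1 as [a|a b c k A H _ IH].
  - exists nil. simpl. tauto.
  - destruct IH as [l [E1 [E2 [E3 E4]]]].
    exists (b :: l). simpl. split; [auto|]. split; [|split; [auto|split; [|exact E4]]].
    + rewrite <- E2. destruct l; [reflexivity|simpl; apply last_cons_default].
    + intros s Hs. apply in_ball_edge; auto.
Qed.

Section Descent.
Variables (n j : nat) (th delta : R) (x y : G) (tau : R).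
Hypotheses (Hth : 0 <= th <= 1/2) (Hdelta : delta < 2 * (INR j + th) + 1)
  (Vt : valid gens (Pt G x y tau)).

Notation r := (INR j + th).
Notation t := (Pt G x y tau).

(* r = j + th is the distance from g to the point u at offset th on the edge from a
   vertex p of level n - j to its parent q, and D is the distance from u to t.  The
   level bound on the end e is what allows two such walks arriving at opposite ends of
   the edge of t to be joined along that edge. *)
Definition near_end_walk (g : G) (D : R) : Prop :=
  exists e c k, edge_end x y tau e c /\ ball_walk n g e k /\ INR k <= r + D - c /\
    (INR (wlen e) <= INR n - r + D - c \/ (wlen x + wlen y + 1 <= 2 * n)%nat).

(* t lies on the edge of u, beyond u as seen from p. *)
Definition same_edge_walks (g p q : G) (D : R) : Prop :=
  ((x = p /\ y = q) \/ (x = q /\ y = p)) /\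
  forall e c, edge_end x y tau e c -> exists k, ball_walk n g e k /\ INR k <= r + D + c.

(* f is the end of the edge of u (p with cf = th and l = j, or q with cf = 1 - th and
   l = j + 1) through which a shortest route from u to t leaves that edge. *)
Lemma near_end_walk_via g f cf l e c D : ball_walk n g f l -> (wlen f + l = n)%nat ->
  r - cf <= INR l <= r + cf -> edge_end x y tau e c -> cf + INR (d f e) + c <= D ->
  dist (vertex G one) t + D <= INR n - r + delta -> near_end_walk g D.
Proof.
  intros Wf Lf Hl Hec HD Ht.
  assert (Hc : 0 <= c <= 1) by (destruct Vt as [Htau _]; simpl in Htau;
    destruct Hec as [[_ ->]|[_ ->]]; lra).
  assert (He := vdist_edge_end_le _ _ _ _ _ Vt Hec).
  assert (Hfe := vdist_triangle one f e). apply le_INR in Hfe. rewrite plus_INR in Hfe.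
  assert (LfR := f_equal INR Lf). rewrite plus_INR in LfR.
  assert (Hgeo : (wlen e + d f e <= n + l)%nat).
  { assert (INR (wlen e + d f e) < INR (n + l + 1)) by (rewrite !plus_INR; simpl; lra).
    apply INR_lt in H. lia. }
  exists e, c, (l + d f e)%nat. split; [exact Hec|]. split.
  - apply ball_walk_trans with f; [exact Wf|].
    apply (reach_ball_walk n l); [apply vdist_reach|lia|exact Hgeo].
  - rewrite plus_INR. split; [lra|left; lra].
Qed.

Section Side.
Variables (g p q : G).
Hypotheses (Wp : ball_walk n g p j) (Lp : (wlen p + j = n)%nat)
  (Lq : (wlen q + j + 1 = n)%nat) (Apq : adjg p q).

Notation u := (Pt G p q th).

Lemma ball_walk_to_parent : ball_walk n g q (S j).
Proof. apply ball_walk_snoc with p; auto. lia. Qed.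

Lemma near_end_walk_via_ends D : via_ends gens u t <= D ->
  dist (vertex G one) t + D <= INR n - r + delta -> near_end_walk g D.
Proof.
  intros HV Ht. unfold via_ends in HV; simpl in HV.
  assert (Wq := ball_walk_to_parent).
  assert (Hp : r - th <= INR j <= r + th) by lra.
  assert (Hq : r - (1 - th) <= INR (S j) <= r + (1 - th)) by (rewrite S_INR; lra).
  assert (Hd : th + INR (d p x) + tau <= D \/ th + INR (d p y) + (1 - tau) <= D \/
    1 - th + INR (d q x) + tau <= D \/ 1 - th + INR (d q y) + (1 - tau) <= D)
    by (unfold_Rmin; lra).
  destruct Hd as [Hd|[Hd|[Hd|Hd]]].
  - apply (near_end_walk_via g p th j x tau D); auto. left; auto.
  - apply (near_end_walk_via g p th j y (1 - tau) D); auto. right; auto.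
  - apply (near_end_walk_via g q (1 - th) (S j) x tau D); auto; [lia|left; auto].
  - apply (near_end_walk_via g q (1 - th) (S j) y (1 - tau) D); auto; [lia|right; auto].
Qed.

Lemma side_walks : dist (vertex G one) t + dist u t <= INR n - r + delta ->
  near_end_walk g (dist u t) \/ same_edge_walks g p q (dist u t).
Proof.
  intro Ht. set (D := dist u t) in *.
  assert (Wq := ball_walk_to_parent).
  assert (Htau : 0 <= tau <= 1) by (destruct Vt; auto).
  assert (Hj := pos_INR j).
  assert (Lpq : (wlen p + wlen q + 1 <= 2 * n)%nat) by lia.
  destruct (pdist_cases u t) as [E|[[E1 [E2 E]]|[E1 [E2 E]]]]; fold D in E.
  - left. apply near_end_walk_via_ends; lra.
  - simpl in E1, E2, E. destruct (Rle_dec tau th).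
    + left. exists x, tau, j. rewrite <- E1, <- E2, E, Rabs_right by lra.
      repeat split; auto; [left; auto|lra].
    + right. split; [left; auto|]. rewrite <- E1, <- E2. intros e c [[-> ->]|[-> ->]].
      * exists j. rewrite E, Rabs_left1 by lra. split; [auto|lra].
      * exists (S j). rewrite E, Rabs_left1, S_INR by lra. split; [auto|lra].
  - simpl in E1, E2, E. destruct (Rle_dec (1 - tau) th).
    + left. exists y, (1 - tau), j. rewrite <- E1, <- E2, E, Rabs_right by lra.
      repeat split; auto; [right; auto|lra|lia].
    + right. split; [right; auto|]. rewrite <- E1, <- E2. intros e c [[-> ->]|[-> ->]].
      * exists (S j). rewrite E, Rabs_left1, S_INR by lra. split; [auto|lra].
      * exists j. rewrite E, Rabs_left1 by lra. split; [auto|lra].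
Qed.
End Side.

Lemma edge_in_ball_of_end_bounds Dx Dy :
  (INR (wlen x) <= INR n - r + Dx - tau \/ (wlen x + wlen y + 1 <= 2 * n)%nat) ->
  (INR (wlen y) <= INR n - r + Dy - (1 - tau) \/ (wlen x + wlen y + 1 <= 2 * n)%nat) ->
  dist (vertex G one) t + Dx <= INR n - r + delta ->
  dist (vertex G one) t + Dy <= INR n - r + delta ->
  (wlen x + wlen y + 1 <= 2 * n)%nat.
Proof.
  intros [Bx|Exy] [By|Exy']; auto. rewrite pdist_vertex_point by exact Vt. intros H1 H2.
  assert (INR (wlen x + wlen y + 1) < INR (2 * n + 1))
    by (rewrite !plus_INR, mult_INR; simpl; unfold_Rmin; lra).
  apply INR_lt in H. lia.
Qed.

Lemma join_near_end_walks g g' D D' : near_end_walk g D -> near_end_walk g' D' ->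
  dist (vertex G one) t + D <= INR n - r + delta ->
  dist (vertex G one) t + D' <= INR n - r + delta ->
  exists k, ball_walk n g g' k /\ INR k <= 2 * r + D + D'.
Proof.
  intros [e [c [k [Hec [Wk [Lk Bk]]]]]] [e' [c' [k' [Hec' [Wk' [Lk' Bk']]]]]] Ht Ht'.
  assert (Htau : 0 <= tau <= 1) by (destruct Vt; auto).
  destruct (classic (e = e')) as [<-|Ne].
  - exists (k + k')%nat. split; [apply ball_walk_trans with e; auto; apply ball_walk_sym; auto|].
    rewrite plus_INR. destruct Hec as [[_ ->]|[_ ->]]; destruct Hec' as [[_ ->]|[_ ->]]; lra.
  - assert (Axy : adjg x y /\ c + c' = 1 /\ ((e = x /\ e' = y) \/ (e = y /\ e' = x))).
    { destruct Vt as [_ [[Exy _]|A]]; simpl in *;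
        destruct Hec as [[-> ->]|[-> ->]]; destruct Hec' as [[-> ->]|[-> ->]];
        solve [congruence | split; [exact A|split; [lra|tauto]]]. }
    destruct Axy as [Axy [Hcc Ee]].
    assert (Mxy : (wlen x + wlen y + 1 <= 2 * n)%nat).
    { destruct Hec as [[-> ->]|[-> ->]]; destruct Hec' as [[-> ->]|[-> ->]];
        try solve [exfalso; congruence].
      - apply (edge_in_ball_of_end_bounds D D'); auto.
      - apply (edge_in_ball_of_end_bounds D' D); auto. }
    assert (Aee : adjg e e' /\ (wlen e + wlen e' + 1 <= 2 * n)%nat).
    { destruct Ee as [[-> ->]|[-> ->]]; split; auto; [apply adj_sym; auto|lia]. }
    exists (k + S k')%nat. split.
    + apply ball_walk_trans with e; auto. econstructor; [apply Aee|apply Aee|].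
      apply ball_walk_sym; auto.
    + rewrite plus_INR, S_INR. lra.
Qed.

Lemma join_side_walks g g' p q p' q' D D' :
  p <> p' -> wlen p = wlen p' -> (wlen q + 1 = wlen p)%nat -> (wlen q' + 1 = wlen p')%nat ->
  dist (vertex G one) t + D <= INR n - r + delta ->
  dist (vertex G one) t + D' <= INR n - r + delta ->
  near_end_walk g D \/ same_edge_walks g p q D ->
  near_end_walk g' D' \/ same_edge_walks g' p' q' D' ->
  exists k, ball_walk n g g' k /\ INR k <= 2 * r + D + D'.
Proof.
  intros Npp Lpp Lq Lq' Ht Ht' [A|[Ea B]] [A'|[Ea' B']].
  - apply join_near_end_walks; auto.
  - destruct A as [e [c [k [Hec [Wk [Lk _]]]]]]. destruct (B' e c Hec) as [k' [Wk' Lk']].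
    exists (k + k')%nat. split; [apply ball_walk_trans with e; auto; apply ball_walk_sym; auto|].
    rewrite plus_INR. lra.
  - destruct A' as [e [c [k' [Hec [Wk' [Lk' _]]]]]]. destruct (B e c Hec) as [k [Wk Lk]].
    exists (k + k')%nat. split; [apply ball_walk_trans with e; auto; apply ball_walk_sym; auto|].
    rewrite plus_INR. lra.
  - exfalso. destruct Ea as [[E1 E2]|[E1 E2]]; destruct Ea' as [[E1' E2']|[E1' E2']];
      rewrite E1 in E1'; rewrite E2 in E2'; subst; first [congruence|lia].
Qed.
End Descent.

Lemma ball_walk_through_one n g g' : wlen g = n -> wlen g' = n -> ball_walk n g g' (n + n).
Proof.
  intros Hg Hg'.
  destruct (geodesic_descent g n n Hg (le_n n)) as [p [Hp Wp]].
  destruct (geodesic_descent g' n n Hg' (le_n n)) as [p' [Hp' Wp']].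
  assert (E : p = p') by (transitivity (gone G); [symmetry|]; apply vdist_eq0; lia).
  subst p'. apply ball_walk_trans with p; [|apply ball_walk_sym]; assumption.
Qed.

Lemma almost_convex_far n j th delta g g' : has_L gens delta -> 0 <= th <= 1/2 ->
  2 * (INR j + th) <= delta < 2 * (INR j + th) + 1 ->
  wlen g = n -> wlen g' = n -> (d g g' <= 2)%nat -> (j + 1 < n)%nat ->
  exists k, ball_walk n g g' k /\ INR k <= 3 * delta + 2.
Proof.
  intros HL Hth [Hdelta1 Hdelta2] Hg Hg' Hgg' Hjn.
  assert (Hj := pos_INR j).
  destruct (geodesic_descent g n j Hg ltac:(lia)) as [p [Lp Wp]].
  destruct (geodesic_descent g' n j Hg' ltac:(lia)) as [p' [Lp' Wp']].
  destruct (exists_parent p ltac:(lia)) as [q [Apq Lq]].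
  destruct (exists_parent p' ltac:(lia)) as [q' [Apq' Lq']].
  destruct (classic (p = p')) as [<-|Npp].
  { exists (j + j)%nat. split; [apply ball_walk_trans with p; auto; apply ball_walk_sym; auto|].
    rewrite plus_INR. lra. }
  set (u := Pt G p q th). set (u' := Pt G p' q' th).
  assert (Vu : valid gens u) by (apply valid_edge_point; auto; lra).
  assert (Vu' : valid gens u') by (apply valid_edge_point; auto; lra).
  destruct (has_L_center delta u u' (vertex G one) HL Vu Vu' (valid_vertex one))
    as [[x y tau] [Vt [P1 [P2 P3]]]].
  { apply pdist_edge_points_neq0; auto; lia. }
  { rewrite pdist_sym. apply pdist_one_edge_point_neq0; auto; lia || lra. }
  { apply pdist_one_edge_point_neq0; auto; lia || lra. }
  assert (Hu : dist (vertex G one) u <= INR n - (INR j + th))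
    by (apply pdist_one_edge_point_le; [lia|lra]).
  assert (Hu' : dist (vertex G one) u' <= INR n - (INR j + th))
    by (apply pdist_one_edge_point_le; [lia|lra]).
  assert (Huu' : dist u u' <= 2 * (INR j + th) + 2).
  { eapply Rle_trans; [apply pdist_edge_points_le; lra|].
    assert (Hpp := vdist_reach_ends_le _ _ _ _ _ _
      (ball_walk_reach _ _ _ _ Wp) (ball_walk_reach _ _ _ _ Wp')).
    apply le_INR in Hpp, Hgg'. rewrite !plus_INR in Hpp. simpl in Hgg'. lra. }
  set (t := Pt G x y tau) in *.
  rewrite (pdist_sym u' (vertex G one)) in P2.
  assert (H3 : dist (vertex G one) t + dist u t <= INR n - (INR j + th) + delta) by lra.
  assert (H3' : dist (vertex G one) t + dist u' t <= INR n - (INR j + th) + delta) by lra.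
  assert (S1 := side_walks n j th delta x y tau Hth Hdelta2 Vt g p q Wp Lp ltac:(lia) Apq H3).
  assert (S2 := side_walks n j th delta x y tau Hth Hdelta2 Vt g' p' q' Wp' Lp' ltac:(lia) Apq'
    H3').
  destruct (join_side_walks n j th delta x y tau Hth Hdelta2 Vt g g' p q p' q' _ _ Npp
    ltac:(lia) Lq Lq' H3 H3' S1 S2) as [k [Wk Lk]].
  exists k. split; [exact Wk|lra].
Qed.
End Cayley.

Lemma exists_half_integer_part delta : 0 <= delta -> exists (j : nat) (th : R),
  0 <= th <= 1/2 /\ 2 * (INR j + th) <= delta < 2 * (INR j + th) + 1.
Proof.
  intro Hd. destruct (Zfloor_bound delta) as [F1 F2].
  assert (Hz : (0 <= Zfloor delta)%Z) by (apply Zfloor_lub; simpl; lra).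
  set (m := Z.to_nat (Zfloor delta)).
  assert (Hm : INR m = IZR (Zfloor delta)) by (unfold m; rewrite INR_IZR_INZ, Z2Nat.id; auto).
  exists (m / 2)%nat, (INR (m mod 2) / 2).
  assert (Hmod : (m mod 2 < 2)%nat) by (apply Nat.mod_upper_bound; lia).
  assert (E : INR m = 2 * (INR (m / 2) + INR (m mod 2) / 2)).
  { rewrite (Nat.div_mod_eq m 2) at 1. rewrite plus_INR, mult_INR. simpl. lra. }
  split; [|lra].
  destruct (m mod 2) as [|[|k]]; simpl; lra || lia.
Qed.

Theorem theorem2p1 (G : Group) (gens : list G) (delta : R) :
  generates gens -> 0 <= delta -> has_L gens delta ->
  forall (n : nat) (g g' : G),
    pdist gens (vertex G (gone G)) (vertex G g) = INR n ->
    pdist gens (vertex G (gone G)) (vertex G g') = INR n ->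
    pdist gens (vertex G g) (vertex G g') <= 2 ->
    exists l : list G,
      edge_path gens (g :: l) /\
      last (g :: l) g = g' /\
      INR (length l) <= 3 * delta + 2 /\
      edges_in_ball gens n (g :: l).
Proof.
  intros Hgen Hdelta HL n g g' Hg Hg' Hgg'.
  rewrite (pdist_vertices G gens Hgen) in Hg, Hg', Hgg'.
  apply INR_eq in Hg, Hg'.
  assert (Hgg2 : (vdist G gens g g' <= 2)%nat) by (apply INR_le; simpl; lra).
  assert (Walk : exists k, ball_walk G gens n g g' k /\ INR k <= 3 * delta + 2).
  { destruct (exists_half_integer_part delta Hdelta) as [j [th [Hth Hj]]].
    destruct (le_lt_dec n (S j)) as [Hn|Hn].
    - exists (n + n)%nat. split; [apply ball_walk_through_one; auto|].
      apply le_INR in Hn. rewrite plus_INR. rewrite S_INR in Hn. lra.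
    - apply (almost_convex_far G gens Hgen n j th); auto; lia. }
  destruct Walk as [k [Wk Lk]].
  destruct (ball_walk_edge_path G gens Hgen n g g' k Wk) as [l [E1 [E2 [E3 E4]]]].
  exists l. rewrite E3. auto.
Qed.
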